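(* Let $A$ be a finite alphabet, let $\mathbf{w}$ be an infinite LSP word over $A$ and let $f$ be a bLSP morphism on $A$. The following are equivalent: (1) $f(\mathbf{w})$ is not LSP; (2) there exist pairwise distinct letters $a,b,c$ such that $\mathbf{w}$ is $(a,b,c)$-fragile and the longest common prefix of $f(b)$ and $f(c)$ is strictly longer than the longest common prefix of $f(a)$ and $f(b)$; (3) there exist pairwise distinct letters $a,b,c$ such that $\mathbf{w}$ is $(a,b,c)$-fragile and $f$ is LSP $(a,b,c)$-breaking.
   Context: A finite word $u$ is a left special factor of a word $w$ if there are distinct letters $x\neq y$ with $xu$ and $yu$ factors of $w$. A word is LSP if every left special factor of it is a prefix of it. A bLSP morphism on $A$ is an endomorphism $f$ of $A^*$ such that there is a letter $\alpha$ with $f(\alpha)=\alpha$ and, for every letter $\beta\neq\alpha$, there is a letter $\gamma$ with $f(\beta)=f(\gamma)\beta$. For pairwise distinct letters $a,b,c$, an infinite word $\mathbf{w}$ is $(a,b,c)$-fragile if there exist a finite word $u$ and distinct letters $\beta\neq\gamma$ such that $ua$ is a prefix of $\mathbf{w}$ and $\beta ub$, $\gamma uc$ are factors of $\mathbf{w}$. A morphism $f$ is LSP $(a,b,c)$-breaking if for every $(a,b,c)$-fragile infinite LSP word $\mathbf{v}$, $f(\mathbf{v})$ is not LSP. *)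

(* Words over a finite alphabet A : finType.
   Finite words: seq A.  Infinite words: nat -> A.
   Morphisms (endomorphisms of A^* ) are given by their images of letters: A -> seq A. *)
From mathcomp Require Import all_boot.
Set Implicit Arguments. Unset Strict Implicit. Unset Printing Implicit Defensive.

Section Words.
Variable A : finType.

Definition iprefix (u : seq A) (w : nat -> A) : Prop :=
  mkseq w (size u) = u.

Definition ifactor (u : seq A) (w : nat -> A) : Prop :=
  exists i, mkseq (fun j => w (i + j)) (size u) = u.

Definition left_special (u : seq A) (w : nat -> A) : Prop :=
  exists x y : A, x != y /\ ifactor (x :: u) w /\ ifactor (y :: u) w.

Definition LSP (w : nat -> A) : Prop :=
  forall u, left_special u w -> iprefix u w.

Definition fimage (f : A -> seq A) (u : seq A) : seq A := flatten (map f u).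

(* image of an infinite word under f: the i-th letter of f(w) is the i-th
   letter of f(w_0 ... w_i); this is exactly f(w) whenever f is non-erasing
   (in particular for every bLSP morphism). *)
Definition iimage (f : A -> seq A) (w : nat -> A) : nat -> A :=
  fun i => nth (w 0) (fimage f (mkseq w i.+1)) i.

Definition bLSP (f : A -> seq A) : Prop :=
  exists alpha : A, f alpha = [:: alpha] /\
    forall beta : A, beta != alpha -> exists gamma : A, f beta = f gamma ++ [:: beta].

Definition fragile (a b c : A) (w : nat -> A) : Prop :=
  exists (u : seq A) (beta gamma : A), beta != gamma /\
    iprefix (rcons u a) w /\ ifactor (beta :: rcons u b) w /\
    ifactor (gamma :: rcons u c) w.

Definition LSP_breaking (f : A -> seq A) (a b c : A) : Prop :=
  forall v : nat -> A, LSP v -> fragile a b c v -> ~ LSP (iimage f v).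

Fixpoint lcp (s t : seq A) : nat :=
  match s, t with
  | x :: s', y :: t' => if x == y then (lcp s' t').+1 else 0
  | _, _ => 0
  end.

End Words.

From mathcomp Require Import all_boot zify.
From Stdlib Require Import Classical.
Set Implicit Arguments. Unset Strict Implicit. Unset Printing Implicit Defensive.

(* A bLSP morphism f has a letter alpha such that every image f(c) starts
   with alpha, contains no other alpha, ends with c, and has all its nonempty
   prefixes in the image of f.  Hence the occurrences of alpha in f(w) are
   exactly the starts of the blocks f(w_j), a letter other than alpha
   determines the letter preceding it in f(w), and a word beginning with alpha
   at a block boundary desubstitutes uniquely as f(v) p with p a nonempty
   prefix of some f(z).
   So a left special factor U of f(w) that is not a prefix begins with alpha at
   two block boundaries preceded by distinct letters x != y, and U = f(v) p
   where x v z and y v z' occur in w and p is a common prefix of f(z) and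
   f(z').  Then v is left special in w, hence v a is a prefix of w, and as U is
   not a prefix of f(w), p is not a prefix of f(a): the letters a, z, z'
   satisfy (2).  Conversely, given (2) with witnesses u, beta, gamma, the word
   f(u) p, with p the longest common prefix of f(b) and f(c), is left special
   in f(w), but it is not a prefix since f(w) continues f(u a) with alpha,
   which does not occur inside f(b).  This converse argument never uses that w
   is LSP, which gives the equivalence with (3). *)

Section Words.
Variable A : finType.
Implicit Types (s t : seq A) (f : A -> seq A) (g h : nat -> A).

Definition ishift (j : nat) (g : nat -> A) : nat -> A := fun n => g (j + n).

Lemma ishiftD i j g : ishift i (ishift j g) =1 ishift (j + i) g.
Proof. by move=> n; rewrite /ishift addnA. Qed.

Lemma mkseqD g m n : mkseq g (m + n) = mkseq g m ++ mkseq (ishift m g) n.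
Proof.
rewrite /mkseq iotaD map_cat add0n; congr (_ ++ _).
by rewrite -{1}(addn0 m) iotaDl -map_comp.
Qed.

Lemma take_mkseq g k n : k <= n -> take k (mkseq g n) = mkseq g k.
Proof. by move/subnKC <-; rewrite mkseqD take_size_cat ?size_mkseq. Qed.

Lemma iprefixP x0 s g : iprefix s g <-> forall i, i < size s -> g i = nth x0 s i.
Proof.
split=> [E i lt | E]; first by rewrite -[in RHS]E nth_mkseq.
by apply: (@eq_from_nth _ x0) => [|i]; rewrite size_mkseq // => lt; rewrite nth_mkseq // E.
Qed.

Lemma iprefix_mkseq g n : iprefix (mkseq g n) g.
Proof. by rewrite /iprefix size_mkseq. Qed.

Lemma iprefix_cons x s g : iprefix (x :: s) g <-> g 0 = x /\ iprefix s (ishift 1 g).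
Proof. by rewrite /iprefix /= (mkseqD g 1) /=; split=> [[-> ->]|[-> ->]]. Qed.

Lemma eq_iprefix g h s : g =1 h -> iprefix s g -> iprefix s h.
Proof. by move=> E; rewrite /iprefix (eq_mkseq E). Qed.

Lemma iprefix_cat s t g :
  iprefix (s ++ t) g -> iprefix s g /\ iprefix t (ishift (size s) g).
Proof.
rewrite /iprefix size_cat mkseqD => /eqP; rewrite eqseq_cat ?size_mkseq //.
by case/andP => /eqP -> /eqP ->.
Qed.

Lemma iprefix_take s t g :
  iprefix s g -> iprefix t g -> size s <= size t -> take (size s) t = s.
Proof. by move=> Es Et le; rewrite -Et take_mkseq. Qed.

Lemma infix_ifactor s t g : infix s t -> ifactor t g -> ifactor s g.
Proof.
move=> /infixP [p [q ->]] [i /iprefix_cat [_ /iprefix_cat [Ps _]]].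
by exists (i + size p); apply: eq_iprefix Ps; apply: ishiftD.
Qed.

Lemma ifactor_mkseq g j n : ifactor (g j :: mkseq (ishift j.+1 g) n) g.
Proof.
exists j; rewrite /= size_mkseq -add1n mkseqD /= addn0.
by congr cons; apply: eq_mkseq => k; rewrite /ishift addnA addn1.
Qed.

Lemma leq_lcp n s t :
  (n <= lcp s t) = [&& n <= size s, n <= size t & take n s == take n t].
Proof.
elim: s t n => [|x s IH] [|y t] [|n] //=; first by rewrite andbF.
by rewrite eqseq_cons; case: (x == y); rewrite !ltnS ?IH ?andFb ?andbF.
Qed.

Lemma fimage_cons f c s : fimage f (c :: s) = f c ++ fimage f s.
Proof. by []. Qed.

Lemma fimage_cat f s t : fimage f (s ++ t) = fimage f s ++ fimage f t.
Proof. by rewrite /fimage map_cat flatten_cat. Qed.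

Lemma fimage_rcons f s c : fimage f (rcons s c) = fimage f s ++ f c.
Proof. by rewrite -cats1 fimage_cat /fimage /= cats0. Qed.

Lemma fimage_take_decomp x0 f s m : 0 < m <= size (fimage f s) ->
  exists k n, [/\ k < size s, 0 < n <= size (f (nth x0 s k)) &
    take m (fimage f s) = fimage f (take k s) ++ take n (f (nth x0 s k))].
Proof.
elim: s m => [|c s IH] m /=; first by rewrite andbC leqNgt andNb.
rewrite fimage_cons size_cat => /andP [m0 ml].
case: (leqP m (size (f c))) => le; first by exists 0, m; rewrite /= m0 le takel_cat.
have /IH [k [n [kl nl E]]] : 0 < m - size (f c) <= size (fimage f s) by lia.
exists k.+1, n; split => //.
by rewrite take_cat ltnNge (ltnW le) /= E fimage_cons catA.
Qed.

End Words.

Section Blocks.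
Variables (A : eqType) (alpha : A).
Implicit Types s t : seq A.

Definition block s : bool :=
  if s is x :: t then (x == alpha) && (alpha \notin t) else false.

Lemma block_size_gt0 s : block s -> 0 < size s.
Proof. by case: s. Qed.

Lemma block_head s : block s -> head alpha s = alpha.
Proof. by case: s => //= x t /andP [/eqP]. Qed.

Lemma block_take n s : 0 < n -> block s -> block (take n s).
Proof.
case: n s => [|n] [|x t] //= _ /andP [-> nt].
by apply: contra nt; apply: mem_take.
Qed.

Lemma block_nth_alpha s k : block s -> k < size s -> nth alpha s k = alpha -> k = 0.
Proof.
case: s => // x t /andP [_ nt]; case: k => //= k lt E.
by move: nt; rewrite -E mem_nth.
Qed.

(* [head alpha t = alpha] says that [t] is empty or starts with [alpha]. *)
Lemma block_cat_inj s1 s2 t1 t2 : block s1 -> block s2 ->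
  head alpha t1 = alpha -> head alpha t2 = alpha ->
  s1 ++ t1 = s2 ++ t2 -> s1 = s2 /\ t1 = t2.
Proof.
wlog le : s1 s2 t1 t2 / size s1 <= size s2.
  move=> W b1 b2 h1 h2 E; case: (leqP (size s1) (size s2)) => [le|/ltnW le].
    exact: W.
  by have [-> ->] := W _ _ _ _ le b2 b1 h2 h1 (esym E).
move=> b1 b2 h1 _ E; have [lt|eq] : size s1 < size s2 \/ size s1 = size s2 by lia.
  have := congr1 (nth alpha ^~ (size s1)) E.
  rewrite nth_cat ltnn subnn nth0 h1 nth_cat lt => /esym /(block_nth_alpha b2 lt) s10.
  by have := block_size_gt0 b1; rewrite s10.
by move/eqP: E; rewrite eqseq_cat // => /andP [/eqP -> /eqP ->].
Qed.

End Blocks.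

Section BLSPMorphism.
Variables (A : finType) (f : A -> seq A) (alpha : A).
Hypothesis f_alpha : f alpha = [:: alpha].
Hypothesis f_step :
  forall beta, beta != alpha -> exists gamma, f beta = f gamma ++ [:: beta].

Lemma bLSP_ind (P : A -> Prop) : P alpha ->
  (forall beta gamma,
     beta != alpha -> f beta = f gamma ++ [:: beta] -> P gamma -> P beta) ->
  forall c, P c.
Proof.
move=> Palpha Pstep c; have [n lt] := ubnP (size (f c)); elim: n c lt => // n IH c.
have [-> //|ne] := eqVneq c alpha; have [gamma E] := f_step ne.
rewrite E size_cat addn1 ltnS => lt.
exact: Pstep ne E (IH gamma lt).
Qed.

Lemma bLSP_block c : block alpha (f c).
Proof.
elim/bLSP_ind: c => [|beta gamma ne ->]; first by rewrite f_alpha /= eqxx.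
case: (f gamma) => //= x t /andP [-> nt].
by rewrite mem_cat negb_or nt mem_seq1 eq_sym ne.
Qed.

Lemma bLSP_last c : last alpha (f c) = c.
Proof. by elim/bLSP_ind: c => [|beta gamma _ ->]; rewrite ?f_alpha // last_cat. Qed.

Lemma bLSP_take c k : k < size (f c) -> take k.+1 (f c) = f (nth alpha (f c) k).
Proof.
elim/bLSP_ind: c k => [|beta gamma _ E IH] k; first by rewrite f_alpha; case: k.
rewrite E size_cat addn1 ltnS leq_eqVlt => /orP [/eqP ->|lt].
  by rewrite take_oversize ?size_cat ?addn1 // nth_cat ltnn subnn -E.
by rewrite takel_cat // nth_cat lt IH.
Qed.

End BLSPMorphism.

Lemma bLSP_marked (A : finType) (f : A -> seq A) : bLSP f ->
  exists alpha, [/\ forall c, block alpha (f c), forall c, last alpha (f c) = c &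
    forall c k, k < size (f c) -> take k.+1 (f c) = f (nth alpha (f c) k)].
Proof.
case=> alpha [f_alpha f_step]; exists alpha.
by split; [exact: bLSP_block | exact: bLSP_last | exact: bLSP_take].
Qed.

Section MarkedMorphism.
Variables (A : finType) (f : A -> seq A) (alpha : A).
Hypothesis f_block : forall c, block alpha (f c).
Hypothesis last_f : forall c, last alpha (f c) = c.
Hypothesis take_f :
  forall c k, k < size (f c) -> take k.+1 (f c) = f (nth alpha (f c) k).
Implicit Types (s t : seq A) (w : nat -> A).

Lemma size_f_gt0 c : 0 < size (f c).
Proof. exact: block_size_gt0. Qed.

Lemma f_inj : injective f.
Proof. by move=> c d E; rewrite -(last_f c) -(last_f d) E. Qed.

Lemma f_rcons c : exists s, f c = rcons s c.
Proof.
case E: (f c) (size_f_gt0 c) => [|x t] // _.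
by exists (belast x t); rewrite lastI -(last_f c) E.
Qed.

Lemma nth_f_last c : nth alpha (f c) (size (f c)).-1 = c.
Proof. by rewrite nth_last last_f. Qed.

Lemma nth_f_pred c d k k' : k.+1 < size (f c) -> k'.+1 < size (f d) ->
  nth alpha (f c) k.+1 = nth alpha (f d) k'.+1 -> nth alpha (f c) k = nth alpha (f d) k'.
Proof.
move=> lt lt' E.
have Etake : take k.+2 (f c) = take k'.+2 (f d) by rewrite !take_f // E.
have ek : k = k' by move: (congr1 size Etake); rewrite !size_takel //; case.
have ltk : k < k.+2 by [].
by rewrite -ek -(nth_take _ ltk) Etake ek nth_take.
Qed.

Lemma size_fimage s : size s <= size (fimage f s).
Proof.
elim: s => //= c s IH; rewrite fimage_cons size_cat.
by have := size_f_gt0 c; lia.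
Qed.

Lemma head_fimage s t : head alpha t = alpha -> head alpha (fimage f s ++ t) = alpha.
Proof.
case: s => //= c s _; rewrite fimage_cons -catA.
by case: (f c) (f_block c) => //= x r /andP [/eqP].
Qed.

Lemma fimage_block_inj s1 s2 p1 p2 : block alpha p1 -> block alpha p2 ->
  fimage f s1 ++ p1 = fimage f s2 ++ p2 -> s1 = s2 /\ p1 = p2.
Proof.
move=> b1 b2; have hp s := head_fimage s (block_head b2).
have hq s := head_fimage s (block_head b1).
have nonempty s p : block alpha p -> fimage f s ++ p <> [::].
  by move=> /block_size_gt0 + /(congr1 size); rewrite size_cat /=; lia.
elim: s1 s2 => [|c1 s1 IH] [|c2 s2] //=; rewrite ?fimage_cons -?catA.
- rewrite -[p1]cats0 => /(block_cat_inj (t1 := [::]) b1 (f_block _) erefl (hp _)).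
  by case=> _ /esym /nonempty.
- rewrite -[p2]cats0 => /(block_cat_inj (t2 := [::]) (f_block _) b2 (hq _) erefl).
  by case=> _ /nonempty.
- case/(block_cat_inj (f_block _) (f_block _) (hq _) (hp _)) => /f_inj -> /IH.
  by case=> -> ->.
Qed.

Definition image_pos w j := size (fimage f (mkseq w j)).

Lemma iprefix_iimage s w : iprefix s w -> iprefix (fimage f s) (iimage f w).
Proof.
have nth_mkseq_le m n i : m <= n -> i < size (fimage f (mkseq w m)) ->
    nth alpha (fimage f (mkseq w m)) i = nth alpha (fimage f (mkseq w n)) i.
  by move/subnKC <- => lt; rewrite mkseqD fimage_cat nth_cat lt.
move=> Ps; apply/(iprefixP alpha) => i lt; rewrite -Ps in lt *.
have lti : i < size (fimage f (mkseq w i.+1)).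
  by apply: leq_trans (size_fimage _); rewrite size_mkseq.
rewrite /iimage (set_nth_default alpha) //.
case: (leqP i.+1 (size s)) => le; first exact: nth_mkseq_le.
by rewrite (nth_mkseq_le _ _ _ (ltnW le)).
Qed.

Lemma iimage_nth w n i : i < size (fimage f (mkseq w n)) ->
  iimage f w i = nth alpha (fimage f (mkseq w n)) i.
Proof.
by move=> lt; have /(iprefixP alpha)/(_ i lt) := iprefix_iimage (iprefix_mkseq w n).
Qed.

Lemma image_posS w j : image_pos w j.+1 = image_pos w j + size (f (w j)).
Proof. by rewrite /image_pos mkseqS fimage_rcons size_cat. Qed.

Lemma iimage_pos w j k : k < size (f (w j)) ->
  iimage f w (image_pos w j + k) = nth alpha (f (w j)) k.
Proof.
move=> lt; have E : fimage f (mkseq w j.+1) = fimage f (mkseq w j) ++ f (w j).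
  by rewrite mkseqS fimage_rcons.
rewrite (iimage_nth (n := j.+1)) E ?size_cat ?ltn_add2l //.
by rewrite nth_cat ltnNge leq_addr /= addKn.
Qed.

Lemma iimage_shift w j : ishift (image_pos w j) (iimage f w) =1 iimage f (ishift j w).
Proof.
move=> i; have lti : i < size (fimage f (mkseq (ishift j w) i.+1)).
  by apply: leq_trans (size_fimage _); rewrite size_mkseq.
rewrite /ishift (iimage_nth (n := j + i.+1)) ?(iimage_nth lti) mkseqD fimage_cat.
  by rewrite nth_cat ltnNge leq_addr /= addKn.
by rewrite size_cat ltn_add2l.
Qed.

Lemma ifactor_iimage s w : ifactor s w -> ifactor (fimage f s) (iimage f w).
Proof.
case=> j Ps; exists (image_pos w j).
apply: (eq_iprefix (g := iimage f (ishift j w))); first by move=> n; rewrite -iimage_shift.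
exact: iprefix_iimage Ps.
Qed.

Lemma iprefix_fimage_take s w n : iprefix s w ->
  iprefix (fimage f s ++ take n (f (w (size s)))) (iimage f w).
Proof.
move=> Ps; have /iprefix_iimage : iprefix (rcons s (w (size s))) w.
  by rewrite /iprefix size_rcons mkseqS Ps.
by rewrite fimage_rcons -{1}(cat_take_drop n (f (w (size s)))) catA => /iprefix_cat [].
Qed.

Lemma iprefix_fimage_alpha s w : iprefix s w ->
  iprefix (fimage f s ++ [:: alpha]) (iimage f w).
Proof.
move/(iprefix_fimage_take 1); have := f_block (w (size s)).
by case: (f (w (size s))) => //= x r /andP [/eqP -> _]; rewrite take0.
Qed.

Lemma image_pos_cover w q : exists j k, q = image_pos w j + k /\ k < size (f (w j)).
Proof.
elim: q => [|q [j [k [-> lt]]]]; first by exists 0, 0; rewrite size_f_gt0.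
case: (ltnP k.+1 (size (f (w j)))) => [lt'|ge]; first by exists j, k.+1; rewrite addnS.
by exists j.+1, 0; rewrite image_posS size_f_gt0; split => //; lia.
Qed.

Lemma iimage_alpha w i : iimage f w i.+1 = alpha ->
  exists j, i.+1 = image_pos w j.+1 /\ iimage f w i = w j.
Proof.
have [j [k [-> lt]]] := image_pos_cover w i.
case: (ltnP k.+1 (size (f (w j)))) => [lt'|ge].
  by rewrite -addnS iimage_pos // => /(block_nth_alpha (f_block _) lt').
have ek : k = (size (f (w j))).-1 by lia.
by exists j; rewrite image_posS iimage_pos // ek nth_f_last; split => //; lia.
Qed.

Lemma iimage_non_alpha w i : iimage f w i.+1 != alpha ->
  exists j k, i = image_pos w j + k /\ k.+1 < size (f (w j)).
Proof.
have [j [k [-> lt]]] := image_pos_cover w i => ne; exists j, k; split => //.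
rewrite ltnNge; apply: contra ne => ge.
have -> : (image_pos w j + k).+1 = image_pos w j.+1 + 0 by rewrite image_posS; lia.
by rewrite iimage_pos ?size_f_gt0 // nth0 block_head.
Qed.

Lemma iimage_pred_uniq w i i' : iimage f w i.+1 != alpha ->
  iimage f w i.+1 = iimage f w i'.+1 -> iimage f w i = iimage f w i'.
Proof.
move=> ne E; have [j [k [Ei lt]]] := iimage_non_alpha ne.
rewrite E in ne; have [j' [k' [Ei' lt']]] := iimage_non_alpha ne.
move: E; rewrite Ei Ei' -!addnS !iimage_pos ?(ltnW lt) ?(ltnW lt') //.
exact: nth_f_pred.
Qed.

Lemma iprefix_iimage_decomp w U : U != [::] -> iprefix U (iimage f w) ->
  exists k n, 0 < n <= size (f (w k)) /\ U = fimage f (mkseq w k) ++ take n (f (w k)).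
Proof.
move=> nU PU; set s := mkseq w (size U).
have le : size U <= size (fimage f s) by have := size_fimage s; rewrite size_mkseq.
have U0 : 0 < size U <= size (fimage f s) by rewrite le lt0n size_eq0 nU.
have [k [n [lt nb E]]] := fimage_take_decomp alpha U0.
rewrite size_mkseq in lt; have kU := ltnW lt.
rewrite nth_mkseq // take_mkseq // in nb E.
by exists k, n; rewrite -E (iprefix_take PU (iprefix_iimage (iprefix_mkseq w _)) le).
Qed.

Lemma left_special_iimage_boundary w U : U != [::] -> left_special U (iimage f w) ->
  exists J J', [/\ w J != w J', iprefix U (iimage f (ishift J.+1 w))
                             & iprefix U (iimage f (ishift J'.+1 w))].
Proof.
case: U => // h U _ [x [y [xy [[i Pi] [i' Pi']]]]].
have occ z j : iprefix (z :: h :: U) (ishift j (iimage f w)) ->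
    [/\ iimage f w j = z, iimage f w j.+1 = h
       & iprefix (h :: U) (ishift j.+1 (iimage f w))].
  move=> /iprefix_cons [gz /(eq_iprefix (ishiftD 1 j _))]; rewrite addn1 => PU.
  split => //; first by rewrite -gz /ishift addn0.
  by case/iprefix_cons: PU; rewrite /ishift addn0.
have [gi gi1 PUi] := occ x i Pi; have [gi' gi1' PUi'] := occ y i' Pi'.
have ha : h = alpha.
  apply/eqP; apply: contraNT xy => nha; rewrite -gi -gi'; apply/eqP.
  by apply: iimage_pred_uniq; rewrite ?gi1 ?gi1'.
have boundary z j : iimage f w j = z -> iimage f w j.+1 = h ->
    iprefix (h :: U) (ishift j.+1 (iimage f w)) ->
    exists J, z = w J /\ iprefix (h :: U) (iimage f (ishift J.+1 w)).
  rewrite ha => <- /iimage_alpha [J [-> ->]] P; exists J; split => //.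
  exact: eq_iprefix (iimage_shift w J.+1) P.
have [J [Ex PJ]] := boundary x i gi gi1 PUi.
have [J' [Ey PJ']] := boundary y i' gi' gi1' PUi'.
by exists J, J'; rewrite -Ex -Ey.
Qed.

Lemma left_special_iimage w U : U != [::] -> left_special U (iimage f w) ->
  exists v (x y z z' : A) n, [/\ x != y, ifactor (x :: rcons v z) w,
    ifactor (y :: rcons v z') w, U = fimage f v ++ take n (f z)
    & 0 < n <= lcp (f z) (f z')].
Proof.
move=> nU /(left_special_iimage_boundary nU) [J [J' [xy PJ PJ']]].
have [k [n [/andP [n0 nz] E]]] := iprefix_iimage_decomp nU PJ.
have [k' [n' [/andP [n0' nz'] E']]] := iprefix_iimage_decomp nU PJ'.
have [Ev Ez] := fimage_block_inj (block_take n0 (f_block _))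
  (block_take n0' (f_block _)) (etrans (esym E) E').
have ek : k' = k by move: (congr1 size Ev); rewrite !size_mkseq.
have en : n' = n by move: (congr1 size Ez); rewrite !size_takel // ek.
subst k' n'.
exists (mkseq (ishift J.+1 w) k), (w J), (w J'), (ishift J.+1 w k), (ishift J'.+1 w k), n.
split => //; first by rewrite -mkseqS; apply: ifactor_mkseq.
  by rewrite Ev -mkseqS; apply: ifactor_mkseq.
by rewrite n0 leq_lcp nz nz' Ez eqxx.
Qed.

Lemma not_LSP_iimage_fragile w : LSP w -> ~ LSP (iimage f w) ->
  exists a b c : A, [/\ a != b, b != c & a != c] /\
    fragile a b c w /\ lcp (f a) (f b) < lcp (f b) (f c).
Proof.
move=> LSPw nLSPfw.
have [U [LS NP]] : exists U, left_special U (iimage f w) /\ ~ iprefix U (iimage f w).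
  by apply: NNPP => H; apply: nLSPfw => U LS; apply: NNPP => NP; apply: H; exists U.
have nU : U != [::] by apply/eqP => U0; apply: NP; rewrite U0.
have [v [x [y [z [z' [n [xy Fz Fz' EU /andP [n0 nzz']]]]]]]] := left_special_iimage nU LS.
have Pv : iprefix v w.
  apply: LSPw; exists x, y; split => //.
  by split; [apply: infix_ifactor Fz | apply: infix_ifactor Fz'];
    apply/prefixW/prefix_rcons.
have Pva : iprefix (rcons v (w (size v))) w by rewrite /iprefix size_rcons mkseqS Pv.
set a := w (size v).
have [nz nz' Ezz'] :
    [/\ n <= size (f z), n <= size (f z') & take n (f z) == take n (f z')].
  by apply/and3P; rewrite -leq_lcp.
have key : lcp (f a) (f z) < n.
  rewrite ltnNge leq_lcp; apply/negP => /and3P [_ _ /eqP Eaz]; apply: NP.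
  by rewrite EU -Eaz; apply: iprefix_fimage_take.
have az : a != z by apply: contraTneq key => ->; rewrite -leqNgt leq_lcp nz eqxx.
have az' : a != z'.
  by apply: contraTneq key => ->; rewrite -leqNgt leq_lcp nz nz' eq_sym Ezz'.
have zz' : z != z'.
  apply: contra az => /eqP Ez; apply/eqP.
  have /LSPw : left_special (rcons v z) w by exists x, y; split => //; rewrite {2}Ez.
  by rewrite /iprefix size_rcons mkseqS Pv => /rcons_inj [].
exists a, z, z'; split; first by rewrite az zz' az'.
split; last exact: leq_trans key nzz'.
by exists v, x, y.
Qed.

Lemma fragile_not_LSP_iimage w a b c :
  fragile a b c w -> lcp (f a) (f b) < lcp (f b) (f c) -> ~ LSP (iimage f w).
Proof.
case=> u [x [y [xy [Pa [Fb Fc]]]]] lt LSPfw.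
set n := lcp (f b) (f c) in lt.
have [nb _ Ebc] :
    [/\ n <= size (f b), n <= size (f c) & take n (f b) == take n (f c)].
  by apply/and3P; rewrite -leq_lcp.
set U := fimage f u ++ take n (f b).
have occ z d : ifactor (z :: rcons u d) w -> take n (f d) = take n (f b) ->
    ifactor (z :: U) (iimage f w).
  move=> /ifactor_iimage F Ed; apply: infix_ifactor F; have [s Ez] := f_rcons z.
  apply/infixP; exists s, (drop n (f d)).
  by rewrite fimage_cons fimage_rcons Ez cat_rcons /U -Ed /= -catA cat_take_drop.
have /iprefix_cat [_ PUb] : iprefix U (iimage f w).
  apply: LSPfw; exists x, y; split => //; split; first exact: occ Fb erefl.
  by apply: occ Fc _; apply/esym/eqP.
have /iprefix_cat [_ PVa] : iprefix (fimage f u ++ f a ++ [:: alpha]) (iimage f w).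
  by rewrite catA -fimage_rcons; apply: iprefix_fimage_alpha.
case: (leqP n (size (f a))) => [na|an].
  have le : size (take n (f b)) <= size (f a ++ [:: alpha]).
    by rewrite size_takel // size_cat addn1 leqW.
  move: (iprefix_take PUb PVa le); rewrite size_takel // takel_cat // => Eab.
  by move: lt; rewrite ltnNge leq_lcp na nb Eab eqxx.
have le : size (f a ++ [:: alpha]) <= size (take n (f b)).
  by rewrite size_takel // size_cat addn1.
move: (iprefix_take PVa PUb le) => /(congr1 (nth alpha ^~ (size (f a)))).
rewrite [RHS]nth_cat ltnn subnn nth_take ?size_cat ?addn1 // nth_take // => E.
have := block_nth_alpha (f_block b) (leq_trans an nb) E.
by have := size_f_gt0 a; lia.
Qed.

End MarkedMorphism.

Theorem lemma3 (A : finType) (w : nat -> A) (f : A -> seq A) :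
  LSP w -> bLSP f ->
  (~ LSP (iimage f w) <->
     exists a b c : A, [/\ a != b, b != c & a != c] /\
       fragile a b c w /\ lcp (f a) (f b) < lcp (f b) (f c)) /\
  ((exists a b c : A, [/\ a != b, b != c & a != c] /\
       fragile a b c w /\ lcp (f a) (f b) < lcp (f b) (f c)) <->
   (exists a b c : A, [/\ a != b, b != c & a != c] /\
       fragile a b c w /\ LSP_breaking f a b c)).
Proof.
move=> LSPw /bLSP_marked [alpha [f_block last_f take_f]].
have lcp_breaking a b c : lcp (f a) (f b) < lcp (f b) (f c) -> LSP_breaking f a b c.
  by move=> lt v _ Fv; exact: (fragile_not_LSP_iimage f_block last_f Fv lt).
split; split.
- exact: (not_LSP_iimage_fragile f_block last_f take_f LSPw).
- by case=> a [b [c [_ [Fr lt]]]]; exact: lcp_breaking lt w LSPw Fr.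
- case=> a [b [c [D [Fr lt]]]]; exists a, b, c.
  by split; last split; last exact: lcp_breaking.
- case=> a [b [c [_ [Fr Br]]]].
  exact: (not_LSP_iimage_fragile f_block last_f take_f LSPw (Br w LSPw Fr)).
Qed.
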